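(* Let $\Psi$ be a well-formed declarative context. If $\Psi\vdash A\le B$, then there exists an unannotated term $f$ that is $\beta\eta$-equal to the identity $\lambda x.x$ such that $\Psi\vdash f:A\to B$ in the type assignment system.
   Context: Types $A,B ::= 1\mid\alpha\mid\forall\alpha.A\mid A\to B$; monotypes $\tau ::= 1\mid\alpha\mid\tau\to\tau'$. Declarative contexts $\Psi ::= \cdot\mid\Psi,\alpha\mid\Psi,x:A$. Well-formedness $\Psi\vdash A$: all free type variables of $A$ are declared in $\Psi$. Declarative subtyping $\Psi\vdash A\le B$ is the least relation with: $\alpha\in\Psi\Rightarrow\Psi\vdash\alpha\le\alpha$; $\Psi\vdash1\le1$; ($\Psi\vdash B_1\le A_1$, $\Psi\vdash A_2\le B_2$) $\Rightarrow\Psi\vdash A_1\to A_2\le B_1\to B_2$; ($\Psi\vdash\tau$ monotype, $\Psi\vdash[\tau/\alpha]A\le B$) $\Rightarrow\Psi\vdash\forall\alpha.A\le B$; ($\Psi,\beta\vdash A\le B$) $\Rightarrow\Psi\vdash A\le\forall\beta.B$. Unannotated terms $t ::= x\mid()\mid\lambda x.t\mid t_1\,t_2$. Type assignment $\Psi\vdash t:A$: $(x:A)\in\Psi\Rightarrow\Psi\vdash x:A$; $\Psi\vdash():1$; $\Psi,x:A\vdash t:B\Rightarrow\Psi\vdash\lambda x.t:A\to B$; ($\Psi\vdash t_1:A\to B$, $\Psi\vdash t_2:A$) $\Rightarrow\Psi\vdash t_1\,t_2:B$; $\Psi,\alpha\vdash t:A\Rightarrow\Psi\vdash t:\forall\alpha.A$;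 ($\Psi\vdash t:\forall\alpha.A$, $\Psi\vdash\tau$ monotype) $\Rightarrow\Psi\vdash t:[\tau/\alpha]A$. *)

From Stdlib Require Import Arith List Relations.
Import ListNotations.

(* Types A,B ::= 1 | alpha | forall alpha. A | A -> B
   (type variables are de Bruijn indices counting the type-variable
   declarations of the context, innermost first) *)
Inductive ty : Type :=
| TUnit : ty
| TVar : nat -> ty
| TAll : ty -> ty
| TArr : ty -> ty -> ty.

Fixpoint mono (A : ty) : Prop :=
  match A with
  | TUnit => True
  | TVar _ => True
  | TAll _ => False
  | TArr A1 A2 => mono A1 /\ mono A2
  end.

Fixpoint tshift (d c : nat) (A : ty) : ty :=
  match A with
  | TUnit => TUnit
  | TVar n => if c <=? n then TVar (n + d) else TVar n
  | TAll A' => TAll (tshift d (S c) A')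
  | TArr A1 A2 => TArr (tshift d c A1) (tshift d c A2)
  end.

(* capture-avoiding substitution of s for variable k (s lives outside the k
   binders), removing variable k *)
Fixpoint tsubst (k : nat) (s : ty) (A : ty) : ty :=
  match A with
  | TUnit => TUnit
  | TVar n => if n <? k then TVar n
              else if n =? k then tshift k 0 s
              else TVar (n - 1)
  | TAll A' => TAll (tsubst (S k) s A')
  | TArr A1 A2 => TArr (tsubst k s A1) (tsubst k s A2)
  end.

(* [tau/alpha]A where A is the body of forall alpha. A *)
Definition topen (A tau : ty) : ty := tsubst 0 tau A.

Fixpoint ty_wf (n : nat) (A : ty) : Prop :=
  match A with
  | TUnit => True
  | TVar m => m < n
  | TAll A' => ty_wf (S n) A'
  | TArr A1 A2 => ty_wf n A1 /\ ty_wf n A2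
  end.

(* Declarative contexts Psi ::= . | Psi, alpha | Psi, x : A
   (the head of the list is the most recent declaration) *)
Inductive entry : Type :=
| ETyVar : entry
| ETmVar : ty -> entry.

Definition ctx := list entry.

Fixpoint ntyvars (G : ctx) : nat :=
  match G with
  | [] => 0
  | ETyVar :: G' => S (ntyvars G')
  | ETmVar _ :: G' => ntyvars G'
  end.

Definition wf_ty (G : ctx) (A : ty) : Prop := ty_wf (ntyvars G) A.

Definition wf_mono (G : ctx) (tau : ty) : Prop := wf_ty G tau /\ mono tau.

(* well-formed context: every declared term variable has a type that is
   well formed in the preceding context (distinctness of names is automatic
   with de Bruijn indices) *)
Fixpoint wf_ctx (G : ctx) : Prop :=
  match G with
  | [] => True
  | ETyVar :: G' => wf_ctx G'
  | ETmVar A :: G' => wf_ty G' A /\ wf_ctx G'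
  end.

(* type of the term variable with de Bruijn index n (counting only term
   variable declarations), transported into the full context *)
Fixpoint lookup (G : ctx) (n : nat) : option ty :=
  match G with
  | [] => None
  | ETyVar :: G' => option_map (tshift 1 0) (lookup G' n)
  | ETmVar A :: G' => match n with 0 => Some A | S n' => lookup G' n' end
  end.

Inductive sub : ctx -> ty -> ty -> Prop :=
| sub_var : forall G n, n < ntyvars G -> sub G (TVar n) (TVar n)
| sub_unit : forall G, sub G TUnit TUnit
| sub_arr : forall G A1 A2 B1 B2,
    sub G B1 A1 -> sub G A2 B2 -> sub G (TArr A1 A2) (TArr B1 B2)
| sub_allL : forall G A B tau,
    wf_mono G tau -> sub G (topen A tau) B -> sub G (TAll A) B
| sub_allR : forall G A B,
    sub (ETyVar :: G) (tshift 1 0 A) B -> sub G A (TAll B).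

Inductive tm : Type :=
| tvar : nat -> tm
| tunit : tm
| tlam : tm -> tm
| tapp : tm -> tm -> tm.

Fixpoint shift (d c : nat) (t : tm) : tm :=
  match t with
  | tvar n => if c <=? n then tvar (n + d) else tvar n
  | tunit => tunit
  | tlam t' => tlam (shift d (S c) t')
  | tapp t1 t2 => tapp (shift d c t1) (shift d c t2)
  end.

Fixpoint subst (k : nat) (s : tm) (t : tm) : tm :=
  match t with
  | tvar n => if n <? k then tvar n
              else if n =? k then shift k 0 s
              else tvar (n - 1)
  | tunit => tunit
  | tlam t' => tlam (subst (S k) s t')
  | tapp t1 t2 => tapp (subst k s t1) (subst k s t2)
  end.

Inductive step : tm -> tm -> Prop :=
| st_beta : forall t u, step (tapp (tlam t) u) (subst 0 u t)
| st_eta : forall t, step (tlam (tapp (shift 1 0 t) (tvar 0))) t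
| st_lam : forall t t', step t t' -> step (tlam t) (tlam t')
| st_appl : forall t1 t1' t2, step t1 t1' -> step (tapp t1 t2) (tapp t1' t2)
| st_appr : forall t1 t2 t2', step t2 t2' -> step (tapp t1 t2) (tapp t1 t2').

Definition beta_eta : tm -> tm -> Prop := clos_refl_sym_trans tm step.

Definition tm_id : tm := tlam (tvar 0).

Inductive has_type : ctx -> tm -> ty -> Prop :=
| ht_var : forall G n A, lookup G n = Some A -> has_type G (tvar n) A
| ht_unit : forall G, has_type G tunit TUnit
| ht_lam : forall G t A B,
    has_type (ETmVar A :: G) t B -> has_type G (tlam t) (TArr A B)
| ht_app : forall G t1 t2 A B,
    has_type G t1 (TArr A B) -> has_type G t2 A -> has_type G (tapp t1 t2) B
| ht_gen : forall G t A,
    has_type (ETyVar :: G) t A -> has_type G t (TAll A)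
| ht_inst : forall G t A tau,
    has_type G t (TAll A) -> wf_mono G tau -> has_type G t (topen A tau).

(* Induction on the subtyping derivation, building a coercion for each rule:
   the identity for the reflexive rules, [fun f1 f2 h x => f2 (h (f1 x))]
   applied to the coercions of the premises for the arrow rule, and the
   eta-expanded application [fun f x => f x] applied to the coercion of the
   premise for the quantifier rules; there the instantiation happens on [x]
   (left rule) and the generalization on [f x] (right rule). Applied to
   identities, both combinators beta-eta-reduce to the identity. *)

From Stdlib Require Import Arith List Relations Lia.

Definition coercion (G : ctx) (f : tm) (A B : ty) : Prop :=
  beta_eta f tm_id /\ has_type G f (TArr A B).

Lemma beta_eta_map (F : tm -> tm) :
  (forall t u, step t u -> step (F t) (F u)) ->
  forall t u, beta_eta t u -> beta_eta (F t) (F u).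
Proof.
  intros HF t u H; induction H.
  - apply rst_step; auto.
  - apply rst_refl.
  - now apply rst_sym.
  - eapply rst_trans; eauto.
Qed.

Lemma beta_eta_appl t t' u : beta_eta t t' -> beta_eta (tapp t u) (tapp t' u).
Proof. apply (beta_eta_map (fun t => tapp t u)); intros; now constructor. Qed.

Lemma beta_eta_appr t u u' : beta_eta u u' -> beta_eta (tapp t u) (tapp t u').
Proof. apply (beta_eta_map (tapp t)); intros; now constructor. Qed.

Lemma tsubst_var_tshift k C : tsubst k (TVar 0) (tshift 1 (S k) C) = C.
Proof.
  revert k; induction C as [| n | C IH | C1 IH1 C2 IH2]; intro k;
    try (simpl; congruence).
  unfold tshift; destruct (Nat.leb_spec (S k) n); unfold tsubst.
  - destruct (Nat.ltb_spec (n + 1) k); [lia|].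
    destruct (Nat.eqb_spec (n + 1) k); [lia|].
    f_equal; lia.
  - destruct (Nat.ltb_spec n k); auto.
    destruct (Nat.eqb_spec n k); [|lia].
    subst; simpl; f_equal; lia.
Qed.

Lemma ht_id G A : has_type G tm_id (TArr A A).
Proof. now repeat constructor. Qed.

Definition arr_coercion : tm :=
  tlam (tlam (tlam (tlam
    (tapp (tvar 2) (tapp (tvar 1) (tapp (tvar 3) (tvar 0))))))).

Definition eta_app : tm := tlam (tlam (tapp (tvar 1) (tvar 0))).

Lemma ht_arr_coercion G A1 A2 B1 B2 :
  has_type G arr_coercion
    (TArr (TArr B1 A1) (TArr (TArr A2 B2) (TArr (TArr A1 A2) (TArr B1 B2)))).
Proof.
  repeat apply ht_lam.
  apply ht_app with A2; [now constructor|].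
  apply ht_app with A1; [now constructor|].
  apply ht_app with B1; now constructor.
Qed.

Lemma ht_eta_app_inst G A B tau :
  wf_mono G tau ->
  has_type G eta_app (TArr (TArr (topen A tau) B) (TArr (TAll A) B)).
Proof.
  intro Htau; repeat apply ht_lam.
  apply ht_app with (topen A tau); [now constructor|].
  apply ht_inst; [now constructor | exact Htau].
Qed.

Lemma ht_eta_app_gen G A B :
  has_type G eta_app (TArr (TAll (TArr (tshift 1 0 A) B)) (TArr A (TAll B))).
Proof.
  repeat apply ht_lam; apply ht_gen.
  apply ht_app with (tshift 1 0 A); [|now constructor].
  (* instantiating the quantifier of [f] with the fresh variable undoes the
     shift incurred by going under [ht_gen] *)
  set (C := TArr (tshift 1 0 A) B).
  pose proof (ht_inst (ETyVar :: ETmVar A :: ETmVar (TAll C) :: G)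
                      (tvar 1) (tshift 1 1 C) (TVar 0)) as Hinst.
  unfold topen in Hinst; rewrite tsubst_var_tshift in Hinst.
  apply Hinst; [now constructor|].
  split; [unfold wf_ty; simpl; lia | exact I].
Qed.

Lemma arr_coercion_id : beta_eta (tapp (tapp arr_coercion tm_id) tm_id) tm_id.
Proof.
  eapply rst_trans; [apply beta_eta_appl, rst_step, st_beta|]; simpl.
  eapply rst_trans; [apply rst_step, st_beta|]; simpl.
  eapply rst_trans; [apply rst_step, st_lam, st_lam, st_appr, st_appr, st_beta|].
  simpl.
  eapply rst_trans; [apply rst_step, st_lam, st_lam, st_beta|]; simpl.
  apply rst_step, st_lam, (st_eta (tvar 0)).
Qed.

Lemma eta_app_id : beta_eta (tapp eta_app tm_id) tm_id.
Proof.
  eapply rst_trans; [apply rst_step, st_beta|]; simpl.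
  apply rst_step, st_lam, st_beta.
Qed.

Lemma coercion_refl G A : coercion G tm_id A A.
Proof. split; [apply rst_refl | apply ht_id]. Qed.

Lemma coercion_arr G A1 A2 B1 B2 f1 f2 :
  coercion G f1 B1 A1 -> coercion G f2 A2 B2 ->
  coercion G (tapp (tapp arr_coercion f1) f2) (TArr A1 A2) (TArr B1 B2).
Proof.
  intros [E1 T1] [E2 T2]; split.
  - eapply rst_trans; [apply beta_eta_appr, E2|].
    eapply rst_trans; [apply beta_eta_appl, beta_eta_appr, E1|].
    apply arr_coercion_id.
  - eapply ht_app; [eapply ht_app; [apply ht_arr_coercion|]|]; eassumption.
Qed.

Lemma coercion_allL G A B tau f :
  wf_mono G tau -> coercion G f (topen A tau) B ->
  coercion G (tapp eta_app f) (TAll A) B.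
Proof.
  intros Htau [E T]; split.
  - eapply rst_trans; [apply beta_eta_appr, E | apply eta_app_id].
  - eapply ht_app; [apply ht_eta_app_inst, Htau | exact T].
Qed.

Lemma coercion_allR G A B f :
  coercion (ETyVar :: G) f (tshift 1 0 A) B ->
  coercion G (tapp eta_app f) A (TAll B).
Proof.
  intros [E T]; split.
  - eapply rst_trans; [apply beta_eta_appr, E | apply eta_app_id].
  - eapply ht_app; [apply ht_eta_app_gen | apply ht_gen, T].
Qed.

Theorem mainTheorem16 : forall (Psi : ctx) (A B : ty),
  wf_ctx Psi -> sub Psi A B ->
  exists f : tm, beta_eta f tm_id /\ has_type Psi f (TArr A B).
Proof.
  intros Psi A B _ H.
  induction H as [| | G A1 A2 B1 B2 _ [f1 H1] _ [f2 H2]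
                  | G A B tau Htau _ [f Hf] | G A B _ [f Hf]].
  - exists tm_id; apply coercion_refl.
  - exists tm_id; apply coercion_refl.
  - eexists; now apply coercion_arr.
  - eexists; now apply coercion_allL with tau.
  - eexists; now apply coercion_allR.
Qed.
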